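(* For contexts $\Gamma,\Theta,\Delta$ and formulas $A,B$: if $\Theta\vdash A$ has a focused derivation and $\Gamma,A,\Delta\vdash B$ has a focused derivation, then $\Gamma,\Theta,\Delta\vdash B$ has a focused derivation.
   Context: Formulas are built from atoms ($p,q,\dots$) by a binary product: every formula is an atom or $A\bullet B$. A context is a finite (possibly empty) list of formulas; commas denote concatenation. A context is irreducible if its leftmost formula is not a product (it is empty or begins with an atom). A focused derivation of a sequent is a finite derivation tree with no undischarged premises using only the rules: ($\bullet L$): from $A,B,\Delta\vdash C$ infer $A\bullet B,\Delta\vdash C$; ($\bullet R^{foc}$): from $\Gamma\vdash A$ and $\Delta\vdash B$ infer $\Gamma,\Delta\vdash A\bullet B$, where $\Gamma$ is irreducible; and ($id^{atm}$): $p\vdash p$ for atoms $p$. *)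

From Stdlib Require Import List.
Import ListNotations.

Inductive formula : Type :=
| At : nat -> formula
| Prod : formula -> formula -> formula.

(* A context is a finite list of formulas; commas = list concatenation. *)
Definition context := list formula.

Definition irreducible (G : context) : Prop :=
  match G with
  | [] => True
  | At _ :: _ => True
  | Prod _ _ :: _ => False
  end.

Inductive foc : context -> formula -> Prop :=
| foc_prodL : forall A B D C,
    foc (A :: B :: D) C -> foc (Prod A B :: D) C
| foc_prodR : forall G D A B,
    irreducible G -> foc G A -> foc D B -> foc (G ++ D) (Prod A B)
| foc_id : forall p, foc [At p] (At p).

From Stdlib Require Import List.
Import ListNotations.

(* Induction on the cut formula A.  An atom is derivable only from itself.  For
   A = X • Y we induct on the derivation of Γ, A, Δ ⊢ B: every rule except a
   left rule on A itself permutes with the cut (the irreducible left premise of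
   a right rule cannot start with A, so A lies strictly inside it or in the
   right premise).  When A is introduced on the left, we induct on the
   derivation of Θ ⊢ X • Y until it ends in a right rule Θ₁ ⊢ X, Θ₂ ⊢ Y, and
   replace the cut on X • Y by cuts on Y and then X. *)

Definition cut_admissible (A : formula) : Prop :=
  forall Theta Gamma Delta B,
    foc Theta A -> foc (Gamma ++ A :: Delta) B -> foc (Gamma ++ Theta ++ Delta) B.

Lemma foc_atom_inv (T : context) (p : nat) : foc T (At p) -> T = [At p].
Proof.
  intros H. remember (At p) as C eqn:HC.
  induction H; [specialize (IHfoc HC) | | ]; congruence.
Qed.

Lemma irreducible_app_l (G D D' : context) :
  G <> [] -> irreducible (G ++ D) -> irreducible (G ++ D').
Proof.
  destruct G as [|[] G]; simpl; tauto.
Qed.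

Lemma cut_admissible_atom (p : nat) : cut_admissible (At p).
Proof.
  intros Theta Gamma Delta B HT H.
  apply foc_atom_inv in HT as ->. exact H.
Qed.

Lemma cut_prod_principal (X Y : formula) (Theta Delta : context) (C : formula) :
  cut_admissible X -> cut_admissible Y ->
  foc Theta (Prod X Y) -> foc (X :: Y :: Delta) C -> foc (Theta ++ Delta) C.
Proof.
  intros cutX cutY HT HC. remember (Prod X Y) as P eqn:HP.
  induction HT as [a b D P' HT IHT | G D a b Hirr HG _ HD _ | q]; try discriminate.
  - apply foc_prodL. exact (IHT HP).
  - injection HP as -> ->.
    assert (HYcut : foc ([X] ++ D ++ Delta) C) by exact (cutY D [X] Delta C HD HC).
    rewrite <- app_assoc.
    exact (cutX G [] (D ++ Delta) C HG HYcut).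
Qed.

Lemma cut_admissible_prod (X Y : formula) :
  cut_admissible X -> cut_admissible Y -> cut_admissible (Prod X Y).
Proof.
  intros cutX cutY Theta Gamma Delta B HT H.
  remember (Gamma ++ Prod X Y :: Delta) as L eqn:HL.
  revert Gamma Delta HL.
  induction H as [a b D C H IH | G D a b Hirr HG IHG HD IHD | p];
    intros Gamma Delta HL.
  - destruct Gamma as [|f Gamma]; simpl in HL.
    + injection HL as -> -> ->. simpl. exact (cut_prod_principal X Y Theta Delta C cutX cutY HT H).
    + injection HL as <- ->. simpl. apply foc_prodL. exact (IH (a :: b :: Gamma) Delta eq_refl).
  - destruct (app_eq_app _ _ _ _ HL) as [l [[-> Hl] | [-> ->]]].
    + destruct l as [|f l]; simpl in Hl.
      * subst D. rewrite app_nil_r in Hirr, HG.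
        apply foc_prodR; [exact Hirr | exact HG | exact (IHD [] Delta eq_refl)].
      * injection Hl as <- ->.
        assert (HGamma : Gamma <> []) by (intros ->; exact Hirr).
        rewrite !app_assoc, <- (app_assoc Gamma).
        apply foc_prodR; [ | | exact HD].
        -- exact (irreducible_app_l _ _ _ HGamma Hirr).
        -- exact (IHG Gamma l eq_refl).
    + rewrite <- app_assoc.
      apply foc_prodR; [exact Hirr | exact HG | exact (IHD l Delta eq_refl)].
  - destruct Gamma as [|g [|]]; discriminate.
Qed.

Lemma cut_admissible_all (A : formula) : cut_admissible A.
Proof.
  induction A as [p | X IHX Y IHY].
  - apply cut_admissible_atom.
  - apply cut_admissible_prod; assumption.
Qed.

Theorem lemma1p14 (Gamma Theta Delta : context) (A B : formula) :
  foc Theta A -> foc (Gamma ++ A :: Delta) B -> foc (Gamma ++ Theta ++ Delta) B.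
Proof. apply cut_admissible_all. Qed.
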